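(* Consider the zooming algorithm on an instance of the Lipschitz MAB problem, let $C>0$, let $d$ be the $C$-zooming dimension of the instance and $\gamma=\frac{d+1}{d+2}$. If phase $i$ is clean, then for every round $t$ of the phase (counted from the start of the phase), $\sum_{v\in S(t)}\Delta(v)\,n_t(v)\le O(C\,i)^{1-\gamma}\,t^{\gamma}$, where $S(t)$ is the set of strategies active at time $t$ and the constant in $O(\cdot)$ is absolute.
   Context: Lipschitz MAB problem on $(L,X)$ of diameter $\le1$: unknown $\mu:X\to[0,1]$ with $|\mu(x)-\mu(y)|\le L(x,y)$; playing $v$ yields an independent sample in $[0,1]$ of mean $\mu(v)$. $\mu^*=\sup_X\mu$, $\Delta(v)=\mu^*-\mu(v)$. Zooming algorithm: phases $i=1,2,\dots$ of $2^i$ rounds; within phase $i$, $n_t(v)$ = number of plays of $v$ in this phase before round $t$, $\mu_t(v)$ = their average reward ($0$ if none), $r_t(v)=\sqrt{8i/(2+n_t(v))}$, $I_t(v)=\mu_t(v)+2r_t(v)$; at phase start nothing is active; $u$ is covered at $t$ if $u\in B(v,r_t(v))$ (open ball) for some active $v$; in each round, if some strategy is uncovered one such is activated, then an active strategy of maximal index is played. Phase $i$ is clean if $|\mu_t(v)-\mu(v)|\le r_t(v)$ for every strategy $v$ played at least once in the phase and every round $t$ of the phase. $C$-zooming dimension: smallest $d$ such that for every $r\in(0,1]$ the set $\{x: r/2<\mu^*-\mu(x)\le r\}$ can be covered by $C r^{-d}$ sets of diameter at most $r/8$. *)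

From Stdlib Require Import Reals Lra Lia Classical ClassicalEpsilon.
Open Scope R_scope.

Definition metric_diam1 {X : Type} (L : X -> X -> R) : Prop :=
  (forall x y, 0 <= L x y) /\
  (forall x y, L x y = 0 <-> x = y) /\
  (forall x y, L x y = L y x) /\
  (forall x y z, L x z <= L x y + L y z) /\
  (forall x y, L x y <= 1).

Definition lipschitz_payoff {X : Type} (L : X -> X -> R) (mu : X -> R) : Prop :=
  (forall x, 0 <= mu x <= 1) /\ (forall x y, Rabs (mu x - mu y) <= L x y).

Definition is_sup_payoff {X : Type} (mu : X -> R) (mustar : R) : Prop :=
  is_lub (fun r => exists x, r = mu x) mustar.

Definition zoom_covers {X : Type} (L : X -> X -> R) (mu : X -> R) (mustar C d : R)
  : Prop :=
  forall r, 0 < r <= 1 ->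
    exists (N : nat) (S : nat -> X -> Prop),
      INR N <= C * Rpower r (- d) /\
      (forall j, (j < N)%nat -> forall x y, S j x -> S j y -> L x y <= r / 8) /\
      (forall x, r / 2 < mustar - mu x <= r -> exists j, (j < N)%nat /\ S j x).

Definition is_zooming_dim {X : Type} (L : X -> X -> R) (mu : X -> R) (mustar C d : R)
  : Prop :=
  0 <= d /\ zoom_covers L mu mustar C d /\
  (forall d', 0 <= d' -> zoom_covers L mu mustar C d' -> d <= d').

(** * One phase of the zooming algorithm, as an execution trace.
    Rounds of phase i are t = 1 .. 2^i.
    act t  : strategy activated in round t (if any)
    play t : strategy played in round t
    rew t  : reward observed in round t *)

Definition indic {X : Type} (a b : X) : nat :=
  if excluded_middle_informative (a = b) then 1%nat else 0%nat.

Fixpoint cnt {X : Type} (play : nat -> X) (v : X) (k : nat) : nat :=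
  match k with
  | O => O
  | S k' => (cnt play v k' + indic (play (S k')) v)%nat
  end.

Fixpoint sumrew {X : Type} (play : nat -> X) (rew : nat -> R) (v : X) (k : nat) : R :=
  match k with
  | O => 0
  | S k' => sumrew play rew v k' + INR (indic (play (S k')) v) * rew (S k')
  end.

Definition n_t {X : Type} (play : nat -> X) (t : nat) (v : X) : nat :=
  cnt play v (t - 1).

Definition mu_t {X : Type} (play : nat -> X) (rew : nat -> R) (t : nat) (v : X) : R :=
  if Nat.eqb (n_t play t v) 0 then 0
  else sumrew play rew v (t - 1) / INR (n_t play t v).

Definition r_t {X : Type} (i : nat) (play : nat -> X) (t : nat) (v : X) : R :=
  sqrt (8 * INR i / (2 + INR (n_t play t v))).

Definition I_t {X : Type} (i : nat) (play : nat -> X) (rew : nat -> R) (t : nat) (v : X)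
  : R := mu_t play rew t v + 2 * r_t i play t v.

Definition active_before {X : Type} (act : nat -> option X) (t : nat) (v : X) : Prop :=
  exists s, (1 <= s < t)%nat /\ act s = Some v.

(* v active at time t (activated in round <= t) : v in S(t) *)
Definition active_at {X : Type} (act : nat -> option X) (t : nat) (v : X) : Prop :=
  exists s, (1 <= s <= t)%nat /\ act s = Some v.

Definition covered {X : Type} (L : X -> X -> R) (i : nat) (act : nat -> option X)
  (play : nat -> X) (t : nat) (u : X) : Prop :=
  exists v, active_before act t v /\ L v u < r_t i play t v.

Definition zooming_phase {X : Type} (L : X -> X -> R) (i : nat)
  (act : nat -> option X) (play : nat -> X) (rew : nat -> R) : Prop :=
  forall t, (1 <= t <= 2 ^ i)%nat ->
    (act t = None -> forall u, covered L i act play t u) /\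
    (forall u, act t = Some u -> ~ covered L i act play t u) /\
    active_at act t (play t) /\
    (forall v, active_at act t v -> I_t i play rew t v <= I_t i play rew t (play t)) /\
    0 <= rew t <= 1.

Definition clean_phase {X : Type} (mu : X -> R) (i : nat) (play : nat -> X)
  (rew : nat -> R) : Prop :=
  forall v t,
    (exists s, (1 <= s <= 2 ^ i)%nat /\ play s = v) ->
    (1 <= t <= 2 ^ i)%nat ->
    Rabs (mu_t play rew t v - mu v) <= r_t i play t v.

(* sum over S(t) of f, enumerating S(t) by activation round
   (activated strategies are pairwise distinct, since an active v covers itself) *)
Fixpoint sum_active {X : Type} (act : nat -> option X) (f : X -> R) (k : nat) : R :=
  match k with
  | O => 0
  | S k' => sum_active act f k' +
            match act (S k') with Some v => f v | None => 0 end
  end.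

From Stdlib Require Import Reals Lra Lia ClassicalEpsilon List.
Open Scope R_scope.

(* Fix a round t of a clean phase i and write D(v) = mu* - mu(v) for the gap.
   The algorithmic facts (section Zooming_phase) are:
   - the played strategy has gap at most 3 r_t (the index is optimistic and
     maximal among active strategies, whose balls cover the whole space), hence
     every strategy v is played at most 72 i / D(v)^2 times;
   - a strategy with D > r/2 keeps a radius above r/8, so two active strategies
     of the shell r/2 < D <= r are more than r/8 apart and each covering set of
     diameter r/8 contains at most one of them: at most C r^-d per shell;
   - each strategy is activated once, so the play counts sum to at most t.
   For any scale delta > 0, the strategies with D <= delta then contribute at
   most delta t, and the dyadic shell (2^-k/2, 2^-k] above delta at most
   144 i 2^k C 2^(kd); summing the geometric series gives
   delta t + 288 C i delta^-(d+1) (lemma regret_at_scale).  The theorem takes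
   delta = (C i / t)^(1/(d+2)), where both terms equal (C i)^(1-gamma) t^gamma. *)

Definition indicator (P : Prop) : R := if excluded_middle_informative P then 1 else 0.

Section Sums_over_active_strategies.
Context {X : Type} (act : nat -> option X).

Lemma sum_active_ext (F G : X -> R) t :
  (forall v, F v = G v) -> sum_active act F t = sum_active act G t.
Proof.
  intros H; induction t as [|t IH]; simpl; auto.
  rewrite IH; destruct (act (S t)); rewrite ?H; auto.
Qed.

Lemma sum_active_le (F G : X -> R) t :
  (forall v, F v <= G v) -> sum_active act F t <= sum_active act G t.
Proof.
  intros H; induction t as [|t IH]; simpl; [lra|].
  destruct (act (S t)) as [v|]; [specialize (H v)|]; lra.
Qed.

Lemma sum_active_zero t : sum_active act (fun _ => 0) t = 0.
Proof. induction t as [|t IH]; simpl; [|rewrite IH; destruct (act (S t))]; ring. Qed.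

Lemma sum_active_plus (F G : X -> R) t :
  sum_active act (fun v => F v + G v) t = sum_active act F t + sum_active act G t.
Proof. induction t as [|t IH]; simpl; [|rewrite IH; destruct (act (S t))]; ring. Qed.

Lemma sum_active_scal (c : R) (F : X -> R) t :
  sum_active act (fun v => c * F v) t = c * sum_active act F t.
Proof. induction t as [|t IH]; simpl; [|rewrite IH; destruct (act (S t))]; ring. Qed.

Lemma sum_active_sum_f (h : nat -> X -> R) M t :
  sum_active act (fun v => sum_f_R0 (fun k => h k v) M) t
  = sum_f_R0 (fun k => sum_active act (h k) t) M.
Proof.
  induction t as [|t IH]; simpl.
  - induction M as [|M IHM]; simpl; [|rewrite <- IHM]; ring.
  - rewrite IH. destruct (act (S t)) as [v|].
    + symmetry; apply sum_plus.
    + rewrite Rplus_0_r. apply sum_eq. intros; ring.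
Qed.

Lemma sum_active_count (P : X -> Prop) (label : X -> nat) N t :
  (forall s v, (1 <= s <= t)%nat -> act s = Some v -> P v -> (label v < N)%nat) ->
  (forall s1 s2 u v, (1 <= s1)%nat -> (s1 < s2 <= t)%nat ->
     act s1 = Some u -> act s2 = Some v -> P u -> P v -> label u <> label v) ->
  sum_active act (fun v => indicator (P v)) t <= INR N.
Proof.
  intros Hrange Hinj.
  assert (Hlabels : forall k, (k <= t)%nat -> exists l,
    sum_active act (fun v => indicator (P v)) k = INR (length l) /\ NoDup l /\
    forall y, In y l -> exists s u, (1 <= s <= k)%nat /\ act s = Some u /\ P u /\ y = label u).
  { induction k as [|k IH]; intros Hk.
    - exists nil; simpl; repeat split; [constructor|]; intros y [].
    - destruct IH as [l [Hsum [Hnd Hin]]]; [lia|].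
      assert (Hin' : forall y, In y l -> exists s u,
                 (1 <= s <= S k)%nat /\ act s = Some u /\ P u /\ y = label u).
      { intros y Hy; destruct (Hin y Hy) as [s [u [Hs Hu]]]; exists s, u; split; [lia|auto]. }
      simpl; rewrite Hsum; unfold indicator.
      destruct (act (S k)) as [v|] eqn:Hact;
        [destruct (excluded_middle_informative (P v)) as [Pv|Pv]|].
      + exists (label v :: l); simpl length; rewrite S_INR; split; [ring|split].
        * constructor; auto. intros Hv.
          destruct (Hin _ Hv) as [s [u [Hs [Hu [Pu Ey]]]]].
          apply (Hinj s (S k) u v); auto; lia.
        * intros y [<-|Hy]; [exists (S k), v; repeat split; auto; lia|auto].
      + exists l; split; [ring|auto].
      + exists l; split; [ring|auto]. }
  destruct (Hlabels t (le_n t)) as [l [Hsum [Hnd Hin]]].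
  rewrite Hsum; apply le_INR.
  replace N with (length (seq 0 N)) by apply length_seq.
  apply NoDup_incl_length; auto.
  intros y Hy; destruct (Hin y Hy) as [s [u [Hs [Hu [Pu ->]]]]].
  apply in_seq; specialize (Hrange s u Hs Hu Pu); lia.
Qed.

End Sums_over_active_strategies.

Lemma sum_f_R0_term_le (g : nat -> R) M k :
  (forall j, 0 <= g j) -> (k <= M)%nat -> g k <= sum_f_R0 g M.
Proof.
  intros Hg Hk; induction M as [|M IH]; simpl.
  - replace k with 0%nat by lia; lra.
  - destruct (Nat.eq_dec k (S M)) as [->|Hne].
    + pose proof (cond_pos_sum g M Hg); lra.
    + pose proof (Hg (S M)); assert (g k <= sum_f_R0 g M) by (apply IH; lia); lra.
Qed.

Lemma dyadic_below (delta : R) : 0 < delta -> exists M : nat, / 2 ^ S M < delta.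
Proof.
  intros Hd.
  destruct (pow_lt_1_zero (/ 2) ltac:(rewrite Rabs_pos_eq; lra) delta Hd) as [M HM].
  exists M; specialize (HM (S M) ltac:(lia)).
  rewrite Rabs_pos_eq in HM by (apply pow_le; lra).
  rewrite <- pow_inv; lra.
Qed.

Lemma dyadic_shell M y : 0 < y <= 1 -> / 2 ^ S M < y ->
  exists k, (k <= M)%nat /\ / 2 ^ k / 2 < y <= / 2 ^ k.
Proof.
  revert y; induction M as [|M IH]; intros y Hy Hlow.
  - exists 0%nat; simpl in *; split; [lia|lra].
  - destruct (Rlt_le_dec (/ 2 ^ S M) y) as [Hlt|Hle].
    + destruct (IH y Hy Hlt) as [k [Hk Hshell]]; exists k; split; [lia|auto].
    + exists (S M); split; [lia|split; [|auto]].
      replace (/ 2 ^ S M / 2) with (/ 2 ^ S (S M)); [auto|].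
      simpl; field; apply pow_nonzero; lra.
Qed.

Lemma geometric_sum_le (ok : nat -> Prop) x E :
  2 <= x -> 0 <= E -> (forall k, ok (S k) -> ok k) -> (forall k, ok k -> x ^ k <= E) ->
  forall M, sum_f_R0 (fun k => if excluded_middle_informative (ok k) then x ^ k else 0) M
            <= 2 * E.
Proof.
  intros Hx HE0 Hdown Hbound.
  set (partial := fun M => sum_f_R0 (fun k =>
                        if excluded_middle_informative (ok k) then x ^ k else 0) M).
  assert (Hinv : forall M, ok M -> partial M <= 2 * x ^ M).
  { induction M as [|M IH]; intros Hok; unfold partial in *; simpl.
    - destruct (excluded_middle_informative (ok 0%nat)); [lra|contradiction].
    - destruct (excluded_middle_informative (ok (S M))); [|contradiction].
      specialize (IH (Hdown _ Hok)); assert (0 <= x ^ M) by (apply pow_le; lra); nra. }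
  assert (HE : forall M, partial M <= 2 * E).
  { induction M as [|M IH]; unfold partial in *; simpl.
    - destruct (excluded_middle_informative (ok 0%nat)) as [Hok|]; [|lra].
      specialize (Hbound _ Hok); simpl in *; lra.
    - destruct (excluded_middle_informative (ok (S M))) as [Hok|]; [|lra].
      pose proof (Hinv M (Hdown _ Hok)).
      specialize (Hbound _ Hok); simpl in Hbound.
      assert (0 <= x ^ M) by (apply pow_le; lra); nra. }
  exact HE.
Qed.

Lemma Rpower_opp_inv (y e : R) : 0 < y -> Rpower y (- e) = Rpower (/ y) e.
Proof. intros Hy; unfold Rpower; rewrite ln_Rinv by lra; f_equal; ring. Qed.

Lemma dyadic_weight (d : R) k :
  2 ^ k * Rpower (/ 2 ^ k) (- d) = (Rpower 2 (d + 1)) ^ k.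
Proof.
  assert (H2k : 0 < 2 ^ k) by (apply pow_lt; lra).
  rewrite Rpower_opp_inv, Rinv_inv by (apply Rinv_0_lt_compat; lra).
  rewrite <- (Rpower_pow k (Rpower 2 (d + 1))) by apply exp_pos.
  rewrite <- (Rpower_pow k 2), !Rpower_mult, <- Rpower_plus by lra.
  f_equal; ring.
Qed.

Lemma dyadic_weight_le (d delta : R) k :
  0 <= d -> 0 < delta -> delta < / 2 ^ k ->
  (Rpower 2 (d + 1)) ^ k <= Rpower delta (- (d + 1)).
Proof.
  intros Hd Hdelta Hk.
  assert (H2k : 0 < 2 ^ k) by (apply pow_lt; lra).
  rewrite <- Rpower_pow, Rpower_mult, Rpower_opp_inv by (apply exp_pos || lra).
  rewrite Rmult_comm, <- Rpower_mult, Rpower_pow by lra.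
  apply Rle_Rpower_l; [lra|split; [lra|]].
  rewrite <- (Rinv_inv (2 ^ k)); apply Rlt_le, Rinv_lt_contravar; [|lra].
  apply Rmult_lt_0_compat; [|apply Rinv_0_lt_compat]; lra.
Qed.

(* Balancing the two error terms delta*b and a*delta^-(d+1): at
   delta = (a/b)^(1/(d+2)) both equal a^(1-gamma) b^gamma, gamma = (d+1)/(d+2). *)
Lemma balanced_scale (a b d : R) : 0 < a -> 0 < b -> 0 <= d ->
  let delta := Rpower (a / b) (/ (d + 2)) in
  let gamma := (d + 1) / (d + 2) in
  a * Rpower delta (- (d + 1)) = delta * b /\
  delta * b = Rpower a (1 - gamma) * Rpower b gamma.
Proof.
  intros Ha Hb Hd delta gamma.
  assert (Hlog : ln (a / b) = ln a - ln b).
  { unfold Rdiv; rewrite ln_mult, ln_Rinv by (try apply Rinv_0_lt_compat; lra); ring. }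
  unfold delta, gamma, Rpower; rewrite ln_exp, Hlog.
  assert (Ea : a = exp (ln a)) by (rewrite exp_ln; lra).
  assert (Eb : b = exp (ln b)) by (rewrite exp_ln; lra).
  set (la := ln a) in *; set (lb := ln b) in *; rewrite Ea, Eb.
  rewrite <- !exp_plus; split; f_equal; field; lra.
Qed.

Lemma cnt_pos_played {X : Type} (play : nat -> X) v k :
  (0 < cnt play v k)%nat -> exists s, (1 <= s <= k)%nat /\ play s = v.
Proof.
  induction k as [|k IH]; simpl; intros Hpos; [lia|].
  unfold indic in Hpos; destruct (excluded_middle_informative (play (S k) = v)) as [E|E].
  - exists (S k); split; [lia|auto].
  - destruct IH as [s [Hs Hplay]]; [lia|]; exists s; split; [lia|auto].
Qed.

Definition shell_above (delta : R) (k : nat) (D : R) : Prop :=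
  / 2 ^ k / 2 < D <= / 2 ^ k /\ delta < D.

Lemma gap_plays_split (c delta D n : R) M :
  0 <= D <= 1 -> 0 <= n -> n * (D * D) <= c -> / 2 ^ S M < delta ->
  D * n <= delta * n
           + sum_f_R0 (fun k => 2 * c * 2 ^ k * indicator (shell_above delta k D)) M.
Proof.
  intros HD Hn Hc HM.
  assert (0 <= c) by (pose proof (Rmult_le_pos _ _ Hn (Rle_0_sqr D)); unfold Rsqr in *; lra).
  assert (Hterm : forall k, 0 <= 2 * c * 2 ^ k * indicator (shell_above delta k D)).
  { intros k; assert (0 < 2 ^ k) by (apply pow_lt; lra); unfold indicator.
    destruct (excluded_middle_informative _); nra. }
  pose proof (cond_pos_sum _ M Hterm).
  destruct (Rle_lt_dec D delta) as [Hsmall|Hbig].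
  { assert (D * n <= delta * n) by (apply Rmult_le_compat_r; lra); lra. }
  assert (0 < / 2 ^ S M) by (apply Rinv_0_lt_compat, pow_lt; lra).
  destruct (dyadic_shell M D ltac:(lra) ltac:(lra)) as [k [Hk [Hlow Hup]]].
  pose proof (sum_f_R0_term_le _ M k Hterm Hk) as Hle.
  unfold indicator at 1 in Hle.
  destruct (excluded_middle_informative (shell_above delta k D)) as [_|Hno];
    [|exfalso; apply Hno; repeat split; lra].
  assert (H2k : 0 < 2 ^ k) by (apply pow_lt; lra).
  assert (Hinv : 1 < D * (2 * 2 ^ k)).
  { apply Rmult_lt_compat_r with (r := 2 * 2 ^ k) in Hlow; [|lra].
    replace (/ 2 ^ k / 2 * (2 * 2 ^ k)) with 1 in Hlow by (field; lra); lra. }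
  (* hence D n <= D n (2 D 2^k) = 2 2^k n D^2 <= 2 c 2^k *)
  assert (Hshell : D * n <= 2 * c * 2 ^ k) by nra.
  assert (0 <= delta * n) by nra.
  lra.
Qed.

Section Zooming_phase.

Context {X : Type} (L : X -> X -> R) (mu : X -> R) (mustar : R) (i : nat)
        (act : nat -> option X) (play : nat -> X) (rew : nat -> R).

Hypothesis Hmetric : metric_diam1 L.
Hypothesis Hlip : lipschitz_payoff L mu.
Hypothesis Hsup : is_sup_payoff mu mustar.
Hypothesis Hi : (1 <= i)%nat.
Hypothesis Hzoom : zooming_phase L i act play rew.
Hypothesis Hclean : clean_phase mu i play rew.

Local Notation gap v := (mustar - mu v).
Local Notation radius := (r_t i play).

Lemma gap_bounds v : 0 <= gap v <= 1.
Proof.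
  assert (mu v <= mustar) by (apply (proj1 Hsup); exists v; auto).
  assert (mustar <= 1) by (apply (proj2 Hsup); intros r [x ->]; apply Hlip).
  pose proof (proj1 Hlip v); lra.
Qed.

Lemma radius_pos t v : 0 < radius t v.
Proof.
  unfold r_t; apply sqrt_lt_R0; apply le_INR in Hi; simpl in Hi.
  pose proof (pos_INR (n_t play t v)); apply Rdiv_lt_0_compat; lra.
Qed.

Lemma radius_sq t v : (2 + INR (n_t play t v)) * (radius t v * radius t v) = 8 * INR i.
Proof.
  unfold r_t; rewrite sqrt_sqrt.
  - pose proof (pos_INR (n_t play t v)); field; lra.
  - pose proof (pos_INR (n_t play t v)); pose proof (pos_INR i).
    apply Rle_mult_inv_pos; lra.
Qed.

(* An unplayed strategy has radius at least 2, so it covers the whole space. *)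
Lemma radius_fresh t v : n_t play t v = 0%nat -> 2 <= radius t v.
Proof.
  intros Hn; pose proof (radius_sq t v) as Hsq; pose proof (radius_pos t v).
  rewrite Hn in Hsq; apply le_INR in Hi; simpl INR in *; nra.
Qed.

Lemma active_covers_itself t v : active_before act t v -> covered L i act play t v.
Proof.
  intros Hv; exists v; split; auto.
  destruct Hmetric as [_ [Hzero _]]; rewrite (proj2 (Hzero v v) eq_refl).
  apply radius_pos.
Qed.

Lemma activated_unplayed s u :
  (1 <= s <= 2 ^ i)%nat -> act s = Some u -> n_t play s u = 0%nat.
Proof.
  intros Hs Hact; destruct (Nat.eq_dec (n_t play s u) 0) as [|Hn]; auto; exfalso.
  destruct (cnt_pos_played play u (s - 1)) as [s' [Hs' Hplay]]; [unfold n_t in Hn; lia|].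
  destruct (Hzoom s' ltac:(lia)) as [_ [_ [[s'' [Hs'' Hact'']] _]]].
  destruct (Hzoom s Hs) as [_ [Huncovered _]].
  apply (Huncovered u Hact), active_covers_itself.
  exists s''; rewrite Hplay in Hact''; split; [lia|auto].
Qed.

Lemma index_optimistic s w :
  (1 <= s <= 2 ^ i)%nat -> mu w + radius s w <= I_t i play rew s w.
Proof.
  intros Hs; unfold I_t.
  destruct (Nat.eq_dec (n_t play s w) 0) as [Hn|Hn].
  - pose proof (radius_fresh s w Hn); pose proof (proj1 Hlip w).
    unfold mu_t; rewrite Hn; simpl; lra.
  - destruct (cnt_pos_played play w (s - 1)) as [s' [Hs' Hplay]]; [unfold n_t in Hn; lia|].
    pose proof (Hclean w s ltac:(exists s'; split; [lia|auto]) Hs) as Hconf.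
    pose proof (Rle_abs (mu w - mu_t play rew s w)).
    rewrite Rabs_minus_sym in Hconf; lra.
Qed.

Lemma payoff_le_played_index s x :
  (1 <= s <= 2 ^ i)%nat -> mu x <= I_t i play rew s (play s).
Proof.
  intros Hs; destruct (Hzoom s Hs) as [Hnone [_ [_ [Hmax _]]]].
  destruct (act s) as [u|] eqn:Hact.
  - (* a fresh strategy was activated: its index is at least 2 >= mu x *)
    pose proof (radius_fresh s u (activated_unplayed s u Hs Hact)).
    pose proof (index_optimistic s u Hs); pose proof (proj1 Hlip u); pose proof (proj1 Hlip x).
    assert (I_t i play rew s u <= I_t i play rew s (play s))
      by (apply Hmax; exists s; split; [lia|auto]).
    lra.
  - (* x is covered by an active w, and mu x < mu w + r_s(w) <= I_s(w) *)
    destruct (Hnone eq_refl x) as [w [[s1 [Hs1 Hact1]] Hball]].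
    pose proof (index_optimistic s w Hs).
    assert (I_t i play rew s w <= I_t i play rew s (play s))
      by (apply Hmax; exists s1; split; [lia|auto]).
    assert (mu x - mu w <= L w x).
    { destruct Hmetric as [_ [_ [Hsym _]]]; rewrite Hsym.
      pose proof (proj2 Hlip x w); pose proof (Rle_abs (mu x - mu w)); lra. }
    lra.
Qed.

Lemma played_gap_le s : (1 <= s <= 2 ^ i)%nat -> gap (play s) <= 3 * radius s (play s).
Proof.
  intros Hs.
  assert (mustar <= I_t i play rew s (play s)).
  { apply (proj2 Hsup); intros r [x ->]; apply payoff_le_played_index; auto. }
  pose proof (Hclean (play s) s ltac:(exists s; split; [lia|auto]) Hs) as Hconf.
  pose proof (Rle_abs (mu_t play rew s (play s) - mu (play s))).
  unfold I_t in *; lra.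
Qed.

Lemma plays_gap_sq k v : (k <= 2 ^ i)%nat -> INR (cnt play v k) * (gap v * gap v) <= 72 * INR i.
Proof.
  induction k as [|k IH]; intros Hk; simpl cnt.
  - pose proof (pos_INR i); simpl; lra.
  - rewrite plus_INR; unfold indic.
    destruct (excluded_middle_informative (play (S k) = v)) as [<-|_];
      [|simpl INR; specialize (IH ltac:(lia)); lra].
    pose proof (played_gap_le (S k) ltac:(lia)) as Hgap.
    pose proof (radius_sq (S k) (play (S k))) as Hsq.
    pose proof (radius_pos (S k) (play (S k))); pose proof (gap_bounds (play (S k))).
    unfold n_t in Hsq; replace (S k - 1)%nat with k in Hsq by lia.
    set (n := INR (cnt play (play (S k)) k)) in *.
    set (r := radius (S k) (play (S k))) in *; set (D := gap (play (S k))) in *.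
    assert (D * D <= 9 * (r * r)) by nra.
    assert (0 <= n) by apply pos_INR.
    simpl INR; nra.
Qed.

Lemma radius_above_shell r s u :
  0 < r <= 1 -> r / 2 < gap u -> (1 <= s <= 2 ^ i)%nat -> r / 8 < radius s u.
Proof.
  intros Hr Hgap Hs; apply Rnot_le_lt; intros Hsmall.
  pose proof (plays_gap_sq (s - 1) u ltac:(lia)) as Hplays.
  pose proof (radius_sq s u) as Hsq; pose proof (radius_pos s u).
  unfold n_t in Hsq; set (n := INR (cnt play u (s - 1))) in *.
  set (q := radius s u) in *; set (D := gap u) in *.
  assert (0 <= n) by apply pos_INR.
  assert (1 <= INR i) by (apply le_INR in Hi; simpl in Hi; lra).
  assert (q * q <= r * r / 64) by nra.
  assert (r * r <= 4 * (D * D)) by nra.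
  nra.
Qed.

Lemma activated_at_most_once w t :
  (t <= 2 ^ i)%nat -> sum_active act (fun v => INR (indic w v)) t <= 1.
Proof.
  intros Ht.
  rewrite (sum_active_ext act _ (fun v => indicator (w = v))).
  2:{ intros v; unfold indic, indicator; destruct (excluded_middle_informative (w = v)); auto. }
  apply (sum_active_count act (fun v => w = v) (fun _ => 0%nat) 1); [intros; lia|].
  intros s1 s2 u v Hs1 Hs12 Hu Hv <- <- _.
  destruct (Hzoom s2 ltac:(lia)) as [_ [Huncovered _]].
  apply (Huncovered w Hv), active_covers_itself; exists s1; split; [lia|auto].
Qed.

Lemma total_plays t k :
  (t <= 2 ^ i)%nat -> sum_active act (fun v => INR (cnt play v k)) t <= INR k.
Proof.
  intros Ht; induction k as [|k IH]; simpl cnt.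
  - simpl; rewrite sum_active_zero; lra.
  - rewrite (sum_active_ext act _ (fun v => INR (cnt play v k) + INR (indic (play (S k)) v)))
      by (intros; apply plus_INR).
    rewrite sum_active_plus, S_INR.
    pose proof (activated_at_most_once (play (S k)) t Ht); lra.
Qed.

(* Active strategies in one shell r/2 < gap <= r are more than r/8 apart, so
   each covering set of diameter r/8 holds at most one of them: at most C r^-d. *)
Lemma shell_count C d r (Q : X -> Prop) t :
  zoom_covers L mu mustar C d -> 0 < r <= 1 -> (t <= 2 ^ i)%nat ->
  sum_active act (fun v => indicator ((r / 2 < gap v <= r) /\ Q v)) t <= C * Rpower r (- d).
Proof.
  intros Hcov Hr Ht.
  destruct (Hcov r Hr) as [N [Sets [HN [Hdiam Hcover]]]].
  set (label := fun v => epsilon (inhabits 0%nat) (fun j => (j < N)%nat /\ Sets j v)).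
  assert (Hlabel : forall v, r / 2 < gap v <= r -> (label v < N)%nat /\ Sets (label v) v).
  { intros v Hv; apply (epsilon_spec (inhabits 0%nat) (fun j => (j < N)%nat /\ Sets j v)).
    apply Hcover; auto. }
  apply Rle_trans with (INR N); auto.
  apply (sum_active_count act _ label).
  - intros s v _ _ [Hv _]; apply Hlabel; auto.
  - intros s1 s2 u v Hs1 Hs12 Hu Hv [Pu _] [Pv _] Hsame.
    destruct (Hlabel u Pu) as [Hju Su]; destruct (Hlabel v Pv) as [_ Sv].
    rewrite <- Hsame in Sv; pose proof (Hdiam (label u) Hju u v Su Sv).
    pose proof (radius_above_shell r s2 u Hr (proj1 Pu) ltac:(lia)).
    destruct (Hzoom s2 ltac:(lia)) as [_ [Huncovered _]].
    apply (Huncovered v Hv); exists u; split; [exists s1; split; [lia|auto]|lra].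
Qed.

Lemma shell_weight_le C d delta k t :
  zoom_covers L mu mustar C d -> (t <= 2 ^ i)%nat ->
  2 ^ k * sum_active act (fun v => indicator (shell_above delta k (gap v))) t
    <= (if excluded_middle_informative (delta < / 2 ^ k) then Rpower 2 (d + 1) ^ k else 0) * C.
Proof.
  intros Hcov Ht; assert (H2k : 0 < 2 ^ k) by (apply pow_lt; lra).
  destruct (excluded_middle_informative (delta < / 2 ^ k)) as [Hok|Hno].
  - assert (Hr : 0 < / 2 ^ k <= 1).
    { split; [apply Rinv_0_lt_compat; lra|].
      rewrite <- Rinv_1; apply Rinv_le_contravar; [lra|apply pow_R1_Rle; lra]. }
    pose proof (shell_count C d (/ 2 ^ k) (fun v => delta < gap v) t Hcov Hr Ht) as Hcount.
    apply Rmult_le_compat_l with (r := 2 ^ k) in Hcount; [|lra].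
    rewrite <- dyadic_weight; unfold shell_above; lra.
  - rewrite (sum_active_ext act _ (fun _ => 0)), sum_active_zero; [lra|].
    intros v; unfold indicator.
    destruct (excluded_middle_informative _) as [[[_ Hup] Hlow]|]; auto.
    exfalso; apply Hno; lra.
Qed.

Lemma regret_at_scale C d delta t :
  0 <= C -> 0 <= d -> zoom_covers L mu mustar C d -> 0 < delta -> (1 <= t <= 2 ^ i)%nat ->
  sum_active act (fun v => gap v * INR (n_t play t v)) t
    <= delta * INR t + 288 * (C * INR i) * Rpower delta (- (d + 1)).
Proof.
  intros HC Hd Hcov Hdelta Ht.
  destruct (dyadic_below delta Hdelta) as [M HM].
  set (c := 72 * INR i); set (x := Rpower 2 (d + 1)); set (E := Rpower delta (- (d + 1))).
  set (ok := fun k => delta < / 2 ^ k).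
  assert (Hc : 0 <= c) by (pose proof (pos_INR i); unfold c; lra).
  assert (Hplays : sum_active act (fun v => INR (n_t play t v)) t <= INR t).
  { unfold n_t; eapply Rle_trans; [apply total_plays; lia|]; apply le_INR; lia. }
  assert (Hshell : forall k, sum_active act
            (fun v => 2 * c * 2 ^ k * indicator (shell_above delta k (gap v))) t
          <= (if excluded_middle_informative (ok k) then x ^ k else 0) * (2 * c * C)).
  { intros k; rewrite sum_active_scal.
    pose proof (shell_weight_le C d delta k t Hcov ltac:(lia)) as Hk.
    apply Rmult_le_compat_l with (r := 2 * c) in Hk; [unfold x, ok; lra|lra]. }
  assert (Hgeo : sum_f_R0 (fun k => if excluded_middle_informative (ok k) then x ^ k else 0) M
                 <= 2 * E).
  { apply geometric_sum_le.
    - unfold x; rewrite <- (Rpower_1 2) at 1 by lra; apply Rle_Rpower; lra.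
    - apply Rlt_le, exp_pos.
    - intros k; unfold ok; simpl; rewrite Rinv_mult.
      assert (0 < / 2 ^ k) by (apply Rinv_0_lt_compat, pow_lt; lra); lra.
    - intros k Hk; apply dyadic_weight_le; auto. }
  eapply Rle_trans.
  { apply sum_active_le; intros v.
    apply (gap_plays_split c delta (gap v) (INR (n_t play t v)) M);
      [apply gap_bounds | apply pos_INR | unfold n_t; apply plays_gap_sq; lia | exact HM]. }
  rewrite sum_active_plus, sum_active_scal.
  rewrite (sum_active_sum_f act (fun k v => 2 * c * 2 ^ k * indicator (shell_above delta k (gap v)))).
  pose proof (sum_Rle _ _ M (fun k _ => Hshell k)) as Hshells.
  rewrite <- scal_sum in Hshells.
  assert (delta * sum_active act (fun v => INR (n_t play t v)) t <= delta * INR t)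
    by (apply Rmult_le_compat_l; lra).
  assert (0 <= 2 * c * C) by (apply Rmult_le_pos; lra).
  unfold c, E in *; nra.
Qed.

End Zooming_phase.

Theorem mainTheorem11 :
  exists K : R, 0 < K /\
  forall (X : Type) (L : X -> X -> R) (mu : X -> R) (mustar C d : R)
         (i : nat) (act : nat -> option X) (play : nat -> X) (rew : nat -> R),
    metric_diam1 L ->
    lipschitz_payoff L mu ->
    is_sup_payoff mu mustar ->
    0 < C ->
    is_zooming_dim L mu mustar C d ->
    (1 <= i)%nat ->
    zooming_phase L i act play rew ->
    clean_phase mu i play rew ->
    let gamma := (d + 1) / (d + 2) in
    forall t : nat, (1 <= t <= 2 ^ i)%nat ->
      sum_active act (fun v => (mustar - mu v) * INR (n_t play t v)) t
        <= K * Rpower (C * INR i) (1 - gamma) * Rpower (INR t) gamma.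
Proof.
  exists 289; split; [lra|].
  intros X L mu mustar C d i act play rew Hmetric Hlip Hsup HC [Hd [Hcov _]] Hi Hzoom Hclean
    gamma t Ht.
  assert (Hci : 0 < C * INR i) by (apply Rmult_lt_0_compat; [|apply (lt_INR 0)]; lia || lra).
  assert (Ht0 : 0 < INR t) by (apply (lt_INR 0); lia).
  (* run the scale argument at the balancing scale delta = (C i / t)^(1/(d+2)) *)
  pose proof (balanced_scale (C * INR i) (INR t) d Hci Ht0 Hd) as Hbalance.
  cbv zeta in Hbalance; destruct Hbalance as [Hequal Hvalue].
  eapply Rle_trans.
  { apply (regret_at_scale L mu mustar i act play rew Hmetric Hlip Hsup Hi Hzoom Hclean
             C d (Rpower (C * INR i / INR t) (/ (d + 2))) t); auto; [lra|apply exp_pos]. }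
  rewrite Rmult_assoc, Hequal, Rmult_assoc; unfold gamma; rewrite <- Hvalue; lra.
Qed.
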